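(* In the crossed product setting described in the context, with $\ast$ an involution on $D$ satisfying $K^\ast\subseteq K$, the following are equivalent: (1) $(k^\ast)^\sigma=(k^\sigma)^\ast$ for every $k\in K$ and $\sigma\in G$; (2) $e_\sigma^\ast e_\sigma\in K$ for every $\sigma\in G$; (3) $f(e_\tau^\ast e_\sigma)=0$ for all $\sigma,\tau\in G$ with $\sigma\neq\tau$.
   Context: Let $K/F$ be a finite Galois extension of fields of characteristic $0$ with Galois group $G$; write $k^\sigma$ for the image of $k\in K$ under $\sigma\in G$. Let $\Phi\colon G\times G\to K\setminus\{0\}$ be a normalized $2$-cocycle, and let $D=(K/F,\Phi)$ be the crossed product: the right $K$-vector space with basis $(e_\sigma)_{\sigma\in G}$, $e_{\mathrm{id}}=1$, with multiplication $(\sum_\sigma e_\sigma c_\sigma)(\sum_\tau e_\tau d_\tau)=\sum_{\sigma,\tau}e_{\sigma\tau}\Phi(\sigma,\tau)c_\sigma^\tau d_\tau$ (so $ke_\sigma=e_\sigma k^\sigma$ for $k\in K$). Assume $D$ is a division algebra (it is central simple over $F$ with maximal subfield $K$). An involution is an additive anti-automorphism of order at most $2$. Define $f\colon D\to K$ by $f(\sum_\sigma e_\sigma c_\sigma)=c_{\mathrm{id}}$. *)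

From HB Require Import structures.
From mathcomp Require Import all_boot all_order all_algebra all_fingroup all_field.
Set Implicit Arguments. Unset Strict Implicit. Unset Printing Implicit Defensive.
Import GRing.Theory.
Local Open Scope ring_scope.

(* Setting: K/F finite Galois is modelled by L : splittingFieldType F with
   galois 1 fullv; K = L, G = gal_of {:L} (all F-automorphisms of L).
   For sigma : G and k : L, "k^sigma" is  sigma k.  MathComp's convention is
   (sigma * tau)%g k = tau (sigma k) (lemma galM), i.e. k^(sigma tau) = (k^sigma)^tau,
   which is the convention forced by associativity of the crossed product. *)

Section CrossedProduct.
Variables (F : fieldType) (L : splittingFieldType F).
Local Notation G := (gal_of (fullv : {vspace L})).

(* An element sum_sigma e_sigma c_sigma of D is represented by its
   coefficient function c : G -> K. *)
Definition cp := {ffun G -> L}.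

Definition cp_e (s : G) : cp := [ffun t => if t == s then 1 else 0].

Definition cp_K (k : L) : cp := [ffun t => if t == 1%g then k else 0].

Definition cp_one : cp := cp_K 1.

Definition cp_mul (Phi : G -> G -> L) (x y : cp) : cp :=
  [ffun r => \sum_(s : G) \sum_(t : G | (s * t)%g == r) Phi s t * t (x s) * y t].

Definition cp_f (x : cp) : L := x 1%g.

(* normalized 2-cocycle (for the right action k^s) with values in K \ {0} *)
Definition normalized_cocycle (Phi : G -> G -> L) : Prop :=
  [/\ forall s t, Phi s t != 0,
      forall s, Phi 1%g s = 1,
      forall s, Phi s 1%g = 1 &
      forall s t r, Phi (s * t)%g r * r (Phi s t) = Phi s (t * r)%g * Phi t r].

Definition cp_division (Phi : G -> G -> L) : Prop :=
  forall x : cp, x != 0 ->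
    exists y : cp, cp_mul Phi x y = cp_one /\ cp_mul Phi y x = cp_one.

Definition cp_involution (Phi : G -> G -> L) (star : cp -> cp) : Prop :=
  [/\ forall x y, star (x + y) = star x + star y,
      forall x y, star (cp_mul Phi x y) = cp_mul Phi (star y) (star x) &
      forall x, star (star x) = x].

Definition stabK (star : cp -> cp) : Prop :=
  forall k : L, exists k' : L, star (cp_K k) = cp_K k'.

(* the restriction of * to K (meaningful under stabK) *)
Definition starK (star : cp -> cp) (k : L) : L := cp_f (star (cp_K k)).

End CrossedProduct.

From HB Require Import structures.
From mathcomp Require Import all_boot all_order all_algebra all_fingroup all_field.
Set Implicit Arguments. Unset Strict Implicit. Unset Printing Implicit Defensive.
Import GRing.Theory.
Local Open Scope ring_scope.

(* Write x_s := star(e_s) and view it through its coefficients x_s(t), t in G.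
   The whole proposition turns on one statement:
       (S)  for every s, x_s is supported at the single point s^-1,
   and each of the three conditions is shown equivalent to (S).
   - Coefficient formulas: right multiplication by e_t, and left and right
     multiplication by elements of K, computed in coordinates.
   - In D we have k e_s = e_s k^s; applying the involution gives
     x_s star(k) = star(k^s) x_s, so every t in the support of x_s satisfies
     star(k) = star(k^s)^t for all k.
     Since the involution is bijective on K, (1) forces st = 1 on that support, giving (S);
     conversely, x_s != 0 so under (S) x_s(s^-1) != 0, which yields (1).
   - (2) and (3) are equivalent to (S) by pure coefficient bookkeeping, for
     an arbitrary element x in place of x_s (only Phi != 0 is used). *)

Section CoefficientFormulas.
Variables (F : fieldType) (L : splittingFieldType F).
Local Notation G := (gal_of (fullv : {vspace L})).
Variable Phi : G -> G -> L.

Lemma cp_mul_e (x : cp L) (t r : G) :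
  cp_mul Phi x (cp_e t) r = Phi (r * t^-1)%g t * t (x (r * t^-1)%g).
Proof.
rewrite /cp_mul ffunE.
rewrite (eq_bigr (fun s => if s == (r * t^-1)%g then Phi s t * t (x s) else 0)).
  by rewrite -big_mkcond /= big_pred1_eq.
move=> s _; rewrite big_mkcond (bigD1 t) //= big1 ?addr0.
  have -> : ((s * t)%g == r) = (s == (r * t^-1)%g).
    by apply/eqP/eqP => [<-|->]; [rewrite mulgK | rewrite mulgKV].
  by rewrite /cp_e ffunE eqxx mulr1; case: ifP.
by move=> u /negbTE Hu; rewrite /cp_e ffunE Hu mulr0; case: ifP.
Qed.

Lemma cp_f_mul_e (x : cp L) (s : G) :
  cp_f (cp_mul Phi x (cp_e s)) = Phi (s^-1)%g s * s (x (s^-1)%g).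
Proof. by rewrite /cp_f cp_mul_e mul1g. Qed.

Lemma cp_mul_K (x : cp L) (k : L) (r : G) :
  cp_mul Phi x (cp_K k) r = Phi r 1%g * x r * k.
Proof.
rewrite /cp_mul ffunE.
rewrite (eq_bigr (fun s => if s == r then Phi s 1%g * x s * k else 0)).
  by rewrite -big_mkcond /= big_pred1_eq.
move=> s _; rewrite big_mkcond (bigD1 1%g) //= big1 ?addr0.
  by rewrite ffunE eqxx mulg1 gal_id; case: ifP.
by move=> u /negbTE Hu; rewrite ffunE Hu mulr0; case: ifP.
Qed.

Lemma cp_K_mul (y : cp L) (k : L) (r : G) :
  cp_mul Phi (cp_K k) y r = Phi 1%g r * r k * y r.
Proof.
rewrite /cp_mul ffunE (bigD1 1%g) //= [X in _ + X]big1 ?addr0 => [|s /negbTE Hs].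
  rewrite (bigD1 r) ?mul1g //= [X in _ + X]big1 ?addr0 ?ffunE ?eqxx //.
  by move=> u /andP[]; rewrite mul1g => /eqP ->; rewrite eqxx.
by apply: big1 => u _; rewrite ffunE Hs rmorph0 mulr0 mul0r.
Qed.

Hypotheses (Phi1l : forall s, Phi 1%g s = 1) (Phi1r : forall s, Phi s 1%g = 1).

Lemma cp_K_e_comm (k : L) (s : G) :
  cp_mul Phi (cp_K k) (cp_e s) = cp_mul Phi (cp_e s) (cp_K (s k)).
Proof.
apply/ffunP => r; rewrite cp_K_mul cp_mul_K /cp_e ffunE.
by case: eqP => [->|_]; rewrite ?Phi1l ?Phi1r ?mulr1 ?mul1r // !mulr0 mul0r.
Qed.

End CoefficientFormulas.

Section SupportConditions.
Variables (F : fieldType) (L : splittingFieldType F).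
Local Notation G := (gal_of (fullv : {vspace L})).
Variable Phi : G -> G -> L.
Hypothesis Phi_neq0 : forall s t, Phi s t != 0.

(* x = e_t c for some c in K, i.e. all coefficients of x away from t vanish. *)
Definition supported_at (x : cp L) (t : G) : Prop :=
  forall r, r != t -> x r = 0.

Lemma Phi_gal_eq0 (a b s : G) (y : L) : (Phi a b * s y == 0) = (y == 0).
Proof. by rewrite mulf_eq0 (negbTE (Phi_neq0 _ _)) fmorph_eq0. Qed.

Lemma mul_e_in_K (x : cp L) (s : G) :
  (exists k, cp_mul Phi x (cp_e s) = cp_K k) <-> supported_at x (s^-1)%g.
Proof.
split=> [[k Hk] r Hr | Hx].
  have := congr1 (fun y : cp L => y (r * s)%g) Hk.
  rewrite cp_mul_e mulgK ffunE.
  have -> : ((r * s)%g == 1%g) = false.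
    by apply/negbTE; apply: contra Hr => /eqP H; rewrite -(mulgK s r) H mul1g.
  by move/eqP; rewrite Phi_gal_eq0 => /eqP.
exists (cp_mul Phi x (cp_e s) 1%g); apply/ffunP => r; rewrite [RHS]ffunE.
case: eqP => [-> //| /eqP Hr].
rewrite cp_mul_e Hx ?rmorph0 ?mulr0 //.
by apply: contra Hr => /eqP H; rewrite -(mulgKV s r) H mulVg.
Qed.

Lemma f_mul_e_eq0 (x : cp L) (t : G) :
  (forall s, s != t -> cp_f (cp_mul Phi x (cp_e s)) = 0)
  <-> supported_at x (t^-1)%g.
Proof.
split=> [Hx r Hr | Hx s Hst].
  have Hrt : (r^-1)%g != t by apply: contra Hr => /eqP <-; rewrite invgK.
  by move: (Hx _ Hrt); rewrite cp_f_mul_e invgK => /eqP; rewrite Phi_gal_eq0 => /eqP.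
rewrite cp_f_mul_e Hx ?rmorph0 ?mulr0 //.
by apply: contra Hst => /eqP /invg_inj ->.
Qed.

End SupportConditions.

Section Involution.
Variables (F : fieldType) (L : splittingFieldType F).
Local Notation G := (gal_of (fullv : {vspace L})).
Variables (Phi : G -> G -> L) (star : cp L -> cp L).
Hypotheses (Phi1l : forall s, Phi 1%g s = 1) (Phi1r : forall s, Phi s 1%g = 1).
Hypotheses (Hstar : cp_involution Phi star) (HK : stabK star).

Lemma star0 : star 0 = 0.
Proof.
case: Hstar => starD _ _.
by apply: (addrI (star 0)); rewrite addr0 -starD addr0.
Qed.

Lemma star_cp_K (k : L) : star (cp_K k) = cp_K (starK star k).
Proof. by case: (HK k) => k' E; rewrite /starK E /cp_f ffunE eqxx. Qed.

Lemma starKK (k : L) : starK star (starK star k) = k.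
Proof.
case: Hstar => _ _ starK2.
have := starK2 (cp_K k); rewrite !star_cp_K => /(congr1 (fun x : cp L => x 1%g)).
by rewrite !ffunE eqxx.
Qed.

Lemma star_e_neq0 (s : G) : star (cp_e s) != 0.
Proof.
case: Hstar => _ _ starK2; apply/eqP => H.
have := starK2 (cp_e s); rewrite H star0 => /(congr1 (fun x : cp L => x s)).
by rewrite !ffunE eqxx => /eqP; rewrite eq_sym oner_eq0.
Qed.

(* Applying the involution to k e_s = e_s k^s: on the support of x_s,
   star(k) = star(k^s)^t. *)
Lemma star_e_support (s t : G) (k : L) :
  star (cp_e s) t != 0 -> starK star k = t (starK star (s k)).
Proof.
case: Hstar => _ starM _ Hx.
have := congr1 star (cp_K_e_comm Phi1l Phi1r k s).
rewrite !starM !star_cp_K => /(congr1 (fun x : cp L => x t)).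
rewrite cp_mul_K cp_K_mul Phi1l Phi1r !mul1r => H.
by apply: (mulfI Hx); rewrite H mulrC.
Qed.

Lemma star_gal_compat_supported (s : G) :
  (forall k, s (starK star k) = starK star (s k))
  <-> supported_at (star (cp_e s)) (s^-1)%g.
Proof.
split=> [compat t | Hsupp k].
  apply: contraNeq => Hx.
  have Hst : (s * t)%g = 1%g.
    apply/eqP/gal_eqP => y _; rewrite gal_id galM ?memvf //.
    by rewrite -{1}(starKK y) compat -(star_e_support _ Hx) starKK.
  by rewrite -(mulKg s t) Hst mulg1.
have Hx : star (cp_e s) (s^-1)%g != 0.
  apply: contra (star_e_neq0 s) => /eqP H0; apply/eqP/ffunP => t.
  by rewrite ffunE; case: (eqVneq t (s^-1)%g) => [->|/Hsupp].
by rewrite (star_e_support k Hx) -galM ?memvf // mulVg gal_id.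
Qed.

End Involution.

Theorem proposition3p2 (F : fieldType) (L : splittingFieldType F)
  (charL0 : [pchar L] =i pred0)
  (galLF : galois 1%VS (fullv : {vspace L}))
  (Phi : gal_of (fullv : {vspace L}) -> gal_of (fullv : {vspace L}) -> L)
  (HPhi : normalized_cocycle Phi)
  (Hdiv : cp_division Phi)
  (star : cp L -> cp L)
  (Hstar : cp_involution Phi star)
  (HK : stabK star) :
  [<-> (forall (k : L) (s : gal_of (fullv : {vspace L})),
          s (starK star k) = starK star (s k));
       (forall s : gal_of (fullv : {vspace L}),
          exists k : L, cp_mul Phi (star (cp_e s)) (cp_e s) = cp_K k);
       (forall s t : gal_of (fullv : {vspace L}), s != t ->
          cp_f (cp_mul Phi (star (cp_e t)) (cp_e s)) = 0)].
Proof.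
case: HPhi => Phi0 Phi1l Phi1r _.
have supp1 s := star_gal_compat_supported Phi1l Phi1r Hstar HK s.
have supp2 s := mul_e_in_K Phi0 (star (cp_e s)) s.
have supp3 t := f_mul_e_eq0 Phi0 (star (cp_e t)) t.
tfae.
- by move=> P1 s; apply/supp2/supp1 => k; apply: P1.
- by move=> P2 s t; apply: (supp3 t).2; apply/supp2.
- by move=> P3 k s; apply: (supp1 s).2; apply/supp3 => t; exact: P3.
Qed.
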